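(* Let $G$ be a group and $p$ a prime number. If the set $\mathrm{val}_{X^p}(G)\cup \mathrm{val}_{[X,Y]}(G)$ does not generate $G$ in finitely many steps, then for every non-principal ultrafilter $\mathcal U$ on $\omega$, the ultrapower $G^{\omega}/\mathcal U$ admits a surjective homomorphism onto $\mathbb Z/p\mathbb Z$.
   Context: For a group $G$ and a group word $w(\bar X)$, $\mathrm{val}_w(G)=\{w(\bar g) : \bar g \text{ a tuple of elements of } G\}$; thus $\mathrm{val}_{X^p}(G)=\{g^p : g\in G\}$ and $\mathrm{val}_{[X,Y]}(G)=\{[g,h] : g,h\in G\}$. A generating subset $S$ of a group $G$ generates $G$ in $n$ steps if $G = (S^{\pm1}\cup\{1\})^n$, i.e. every element of $G$ is a product of $n$ elements of $S\cup S^{-1}\cup\{1\}$; ''$S$ generates $G$ in finitely many steps'' means this holds for some $n\in\mathbb N$. $G^{\omega}/\mathcal U$ is the ultrapower of $G$ with respect to $\mathcal U$. *)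

(* abstract (possibly infinite) groups are given
   by an explicit record with the group axioms. *)
From mathcomp Require Import all_boot all_algebra.
From Stdlib Require Import List.

Set Implicit Arguments.
Unset Strict Implicit.
Unset Printing Implicit Defensive.

Record Grp := MkGrp {
  carrier :> Type;
  gmul : carrier -> carrier -> carrier;
  ginv : carrier -> carrier;
  gone : carrier;
  gmulA : forall x y z, gmul x (gmul y z) = gmul (gmul x y) z;
  gmul1 : forall x, gmul gone x = x;
  gmulV : forall x, gmul (ginv x) x = gone;
  gmul1r : forall x, gmul x gone = x;
  gmulVr : forall x, gmul x (ginv x) = gone
}.

Section GroupDefs.
Variable G : Grp.

Fixpoint gpow (g : G) (n : nat) : G :=
  match n with 0 => gone G | S k => gmul g (gpow g k) end.

Definition gcomm (g h : G) : G :=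
  gmul (gmul (ginv g) (ginv h)) (gmul g h).

Definition val_pow (p : nat) (x : G) : Prop := exists g, x = gpow g p.
Definition val_comm (x : G) : Prop := exists g h, x = gcomm g h.

Definition gprod (l : list G) : G := fold_right (@gmul G) (gone G) l.

Definition generates_in_steps (S : G -> Prop) (n : nat) : Prop :=
  forall g : G, exists l : list G,
    length l = n /\
    (forall x, In x l -> S x \/ S (ginv x) \/ x = gone G) /\
    gprod l = g.

Definition generates_finitely (S : G -> Prop) : Prop :=
  exists n, generates_in_steps S n.
End GroupDefs.

Definition ultrafilter (U : (nat -> Prop) -> Prop) : Prop :=
  U (fun _ => True) /\
  ~ U (fun _ => False) /\
  (forall A B : nat -> Prop, U A -> (forall n, A n -> B n) -> U B) /\
  (forall A B : nat -> Prop, U A -> U B -> U (fun n => A n /\ B n)) /\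
  (forall A : nat -> Prop, U A \/ U (fun n => ~ A n)).

Definition nonprincipal (U : (nat -> Prop) -> Prop) : Prop :=
  forall k : nat, ~ U (fun n => n = k).

(* The ultrapower G^omega/U is the quotient of the direct power nat -> G
   (pointwise operations) by  f ~ g  iff  {n | f n = g n} ∈ U.
   A homomorphism G^omega/U -> H is the same as a homomorphism nat -> G -> H
   that is constant on ~-classes.  We state surjective homomorphisms onto
   Z/pZ (additive group 'Z_p) this way. *)
Definition ultrapower_hom_onto (G : Grp) (U : (nat -> Prop) -> Prop) (p : nat)
  (phi : (nat -> G) -> 'Z_p) : Prop :=
  (forall f g : nat -> G, U (fun n => f n = g n) -> phi f = phi g) /\
  (forall f g : nat -> G, phi (fun n => gmul (f n) (g n)) = (phi f + phi g)%R) /\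
  (forall z : 'Z_p, exists f, phi f = z).

From mathcomp Require Import all_boot all_algebra.
From mathcomp Require Import boolp classical_sets.
From Stdlib Require Import List.

Set Implicit Arguments.
Unset Strict Implicit.
Unset Printing Implicit Defensive.

Local Open Scope classical_set_scope.

(* Let S be the set of p-th powers and commutators of G and let
   U be a non-principal ultrafilter on omega.  In the power G^omega consider
   the set N of sequences whose S-word length is bounded on a U-large set.
   N is closed under products, contains every sequence of p-th powers and of
   commutators, and contains every sequence U-equal to 1.  Since S does not
   generate G in finitely many steps, there is a sequence w whose n-th term
   has S-length > n; as U is non-principal, w is not in N.
   By Zorn's lemma N extends to a multiplicatively closed M maximal among
   those avoiding w.  Such an M, containing all p-th powers and commutators,
   is the kernel of an epimorphism phi : G^omega -> Z/pZ: every element lies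
   in a coset M w^k with k unique mod p, and phi maps it to k.  Since phi
   kills N, it factors through the ultrapower G^omega/U. *)

Section GroupFacts.
Variable H : Grp.
Local Notation "x ** y" := (gmul x y) (at level 40, left associativity).

Lemma gmulKg (x y : H) : ginv x ** (x ** y) = y.
Proof. by rewrite gmulA gmulV gmul1. Qed.

Lemma gmulgK (x y : H) : (y ** x) ** ginv x = y.
Proof. by rewrite -gmulA gmulVr gmul1r. Qed.

Lemma ginv_uniq (x y : H) : x ** y = gone H -> ginv x = y.
Proof. by move=> xy1; rewrite -(gmul1r (ginv x)) -xy1 gmulKg. Qed.

Lemma ginvK (x : H) : ginv (ginv x) = x.
Proof. by apply: ginv_uniq; rewrite gmulV. Qed.

Lemma ginvM (x y : H) : ginv (x ** y) = ginv y ** ginv x.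
Proof. by apply: ginv_uniq; rewrite -gmulA (gmulA y) gmulVr gmul1 gmulVr. Qed.

Lemma gpowD (x : H) a b : gpow x (a + b) = gpow x a ** gpow x b.
Proof. by elim: a => [|a IH] /=; rewrite ?gmul1 // IH gmulA. Qed.

Lemma gpowM (x : H) a b : gpow x (a * b) = gpow (gpow x a) b.
Proof. by elim: b => [|b IH]; rewrite ?muln0 // mulnS gpowD IH. Qed.

Lemma gpow1n n : gpow (gone H) n = gone H.
Proof. by elim: n => [|n IH] //=; rewrite IH gmul1. Qed.

Lemma gpowSr (x : H) n : gpow x n.+1 = gpow x n ** x.
Proof. by rewrite -addn1 gpowD /= gmul1r. Qed.

Lemma ginv_gpow (x : H) n : ginv (gpow x n) = gpow (ginv x) n.
Proof.
elim: n => [|n IH] /=; first by apply: ginv_uniq; rewrite gmul1.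
by rewrite ginvM IH -gpowSr.
Qed.

(* Conjugating m by x only multiplies it by a commutator. *)
Lemma mul_comm_shift (m x : H) : x ** m = (m ** gcomm m (ginv x)) ** x.
Proof. by rewrite /gcomm ginvK !gmulA gmulVr gmul1 -gmulA gmulV gmul1r. Qed.

Lemma gpow_coprime_root (x : H) p c u t : c * u = (t * p).+1 ->
  x = gpow (gpow x c) u ** ginv (gpow (gpow x p) t).
Proof. by move=> cu; rewrite -gpowM cu /= mulnC gpowM gmulgK. Qed.
End GroupFacts.

Lemma inverse_mod_prime p c : prime p -> ~~ (p %| c) ->
  exists u t, c * u = (t * p).+1.
Proof.
move=> p_pr ndvd; have c_gt0 : 0 < c by case: c ndvd; rewrite ?dvdn0.
have /eqP cop : coprime c p by rewrite coprime_sym prime_coprime.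
case: (egcdnP p c_gt0) => km kn ckm _; exists km, kn.
by rewrite mulnC ckm cop addn1.
Qed.

Lemma Zp_natr_mod p a b : prime p -> a = b %[mod p] ->
  (a%:R : 'Z_p)%R = (b%:R)%R.
Proof. by move=> p_pr eq_ab; apply: val_inj; rewrite /= !val_Zp_nat ?prime_gt1. Qed.

Definition mul_closed (H : Grp) (A : set H) : Prop :=
  forall x y, A x -> A y -> A (gmul x y).

Section QuotientByMaximal.
Variables (H : Grp) (p : nat) (v : H) (M : set H).
Local Notation "x ** y" := (gmul x y) (at level 40, left associativity).
Hypothesis p_pr : prime p.
Hypothesis M_pow : forall x, M (gpow x p).
Hypothesis M_comm : forall x y, M (gcomm x y).
Hypothesis M_mul : mul_closed M.
Hypothesis M_v : ~ M v.
Hypothesis M_max :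
  forall M' : set H, M `<=` M' -> mul_closed M' -> ~ M' v -> M' `<=` M.

Lemma M_one : M (gone H).
Proof. by rewrite -(gpow1n H p). Qed.

Lemma M_gpow x n : M x -> M (gpow x n).
Proof. by move=> Mx; elim: n => [|n IH] /=; [exact: M_one | exact: M_mul]. Qed.

(* x^-1 = (x^-1)^p x^(p-1), a product of elements of M. *)
Lemma M_inv x : M x -> M (ginv x).
Proof.
move=> Mx; have := prime_gt0 p_pr; case: p M_pow => [//|q] Mp _.
have -> : ginv x = ginv (gpow x q.+1) ** gpow x q.
  by rewrite gpowSr ginvM -gmulA gmulV gmul1r.
by rewrite ginv_gpow; apply: M_mul; [exact: Mp | exact: M_gpow].
Qed.

Lemma M_shift m x : M m -> exists2 m', M m' & x ** m = m' ** x.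
Proof.
by move=> Mm; exists (m ** gcomm m (ginv x)); [exact: M_mul | exact: mul_comm_shift].
Qed.

Lemma M_gpow_v_dvd c : M (gpow v c) -> p %| c.
Proof.
apply: contraPP => /negP ndvd Mvc; have [u [t cu]] := inverse_mod_prime p_pr ndvd.
apply: M_v; rewrite (gpow_coprime_root v cu).
by apply: M_mul; [exact: M_gpow | apply/M_inv/M_gpow].
Qed.

Definition in_coset (k : nat) (x : H) : Prop := exists2 m, M m & x = m ** gpow v k.

Lemma in_coset_M m : M m -> in_coset 0 m.
Proof. by move=> Mm; exists m; rewrite //= gmul1r. Qed.

Lemma in_coset_mul a b x y : in_coset a x -> in_coset b y -> in_coset (a + b) (x ** y).
Proof.
move=> [m1 Mm1 ->] [m2 Mm2 ->]; have [m' Mm' shift] := M_shift (gpow v a) Mm2.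
exists (m1 ** m'); first exact: M_mul.
by rewrite gpowD -!gmulA (gmulA (gpow v a)) shift -!gmulA.
Qed.

Lemma in_coset_mulM a x m : in_coset a x -> M m -> in_coset a (x ** m).
Proof.
move=> [m1 Mm1 ->] Mm; have [m' Mm' shift] := M_shift (gpow v a) Mm.
by exists (m1 ** m'); [exact: M_mul | rewrite -gmulA shift gmulA].
Qed.

Lemma in_coset_gpow a x n : in_coset a x -> in_coset (a * n) (gpow x n).
Proof.
move=> xa; elim: n => [|n IH] /=; first by rewrite muln0; exact/in_coset_M/M_one.
by rewrite mulnS; exact: in_coset_mul.
Qed.

Lemma in_coset_uniq a b x : in_coset a x -> in_coset b x -> a = b %[mod p].
Proof.
wlog le_ba : a b / b <= a.
  move=> wl xa xb; case: (leqP b a) => [|/ltnW] le; first exact: wl.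
  by symmetry; exact: wl.
move=> [m1 Mm1 ->] [m2 Mm2]; rewrite -(subnK le_ba) gpowD gmulA => eq12.
have Mvab : M (gpow v (a - b)).
  have -> : gpow v (a - b) = ginv m1 ** m2.
    by rewrite -(gmulgK (gpow v b) m2) -eq12 gmulgK gmulKg.
  by apply: M_mul; [exact: M_inv | done].
by apply/eqP; rewrite subnK // eqn_mod_dvd //; exact: M_gpow_v_dvd.
Qed.

(* Every element lies in some coset; this is where maximality of M is used:
   M together with the powers of x reaches v. *)
Lemma in_coset_exists x : exists k, in_coset k x.
Proof.
have [Mx|Mx] := pselect (M x); first by exists 0; exact: in_coset_M.
pose Mx' y := exists m j, M m /\ y = m ** gpow x j.
have M_Mx' : M `<=` Mx' by move=> y My; exists y, 0; rewrite /= gmul1r.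
have mul_Mx' : mul_closed Mx'.
  move=> y z [m1 [i [Mm1 ->]]] [m2 [j [Mm2 ->]]].
  have [m' Mm' shift] := M_shift (gpow x i) Mm2.
  exists (m1 ** m'), (i + j); split; first exact: M_mul.
  by rewrite gpowD -!gmulA (gmulA (gpow x i)) shift -!gmulA.
have [m [j [Mm vE]]] : Mx' v.
  apply: contrapT => Mx'v; apply/Mx/(M_max M_Mx' mul_Mx' Mx'v).
  by exists (gone H), 1; split; [exact: M_one | rewrite /= gmul1 gmul1r].
have xj1 : in_coset 1 (gpow x j).
  by exists (ginv m); [exact: M_inv | rewrite /= gmul1r vE gmulKg].
have ndvd : ~~ (p %| j).
  apply/negP => /dvdnP[q jq]; apply: M_v.
  by rewrite vE jq gpowM; apply: M_mul.
have [u [t ju]] := inverse_mod_prime p_pr ndvd.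
exists (1 * u); rewrite (gpow_coprime_root x ju).
by apply: in_coset_mulM; [exact: in_coset_gpow | apply/M_inv/M_gpow].
Qed.

Definition coset_index (x : H) : nat := sval (cid (in_coset_exists x)).

Lemma coset_indexP x : in_coset (coset_index x) x.
Proof. exact: svalP (cid (in_coset_exists x)). Qed.

Lemma coset_indexE k x : in_coset k x -> ((coset_index x)%:R = k%:R :> 'Z_p)%R.
Proof. by move=> xk; apply/Zp_natr_mod/in_coset_uniq/xk/coset_indexP. Qed.

Theorem epi_onto_Zp_of_maximal : exists phi : H -> 'Z_p,
  [/\ forall x y, phi (x ** y) = (phi x + phi y)%R,
      forall m, M m -> phi m = 0%R
    & forall z : 'Z_p, exists x, phi x = z].
Proof.
exists (fun x => (coset_index x)%:R)%R; split.
- move=> x y; rewrite -GRing.natrD; apply: coset_indexE.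
  exact: in_coset_mul (coset_indexP x) (coset_indexP y).
- by move=> m Mm; apply: (coset_indexE (k := 0)); exact: in_coset_M.
- move=> z; exists (gpow v z); rewrite -[RHS]natr_Zp; apply: coset_indexE.
  by exists (gone H); [exact: M_one | rewrite gmul1].
Qed.
End QuotientByMaximal.

(* We apply the library's Zorn lemma to the sets X such that N `|` X is
   still closed and avoids v, so that the empty chain is harmless. *)
Lemma exists_maximal_avoiding (H : Grp) (N : set H) (v : H) :
  mul_closed N -> ~ N v ->
  exists M : set H, [/\ N `<=` M, mul_closed M, ~ M v &
    forall M' : set H, M `<=` M' -> mul_closed M' -> ~ M' v -> M' `<=` M].
Proof.
move=> N_mul N_v; pose P (X : set H) := mul_closed (N `|` X) /\ ~ (N `|` X) v.
have chainP F : F `<=` P -> total_on F subset -> P (\bigcup_(X in F) X).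
  move=> FP Ftot; pose F0 X := X = set0 \/ F X.
  have F0P : F0 `<=` P by move=> X [->|/FP //]; rewrite /P setU0.
  have F0tot : total_on F0 subset.
    by move=> X Y [->|FX] [->|FY]; try (by left) || (by right); exact: Ftot.
  have F0sub X : F0 X -> X `<=` \bigcup_(Y in F) Y.
    by move=> [->|FX] //; exact: bigcup_sup.
  have pick x : (N `|` \bigcup_(X in F) X) x -> exists2 X, F0 X & (N `|` X) x.
    by move=> [Nx|[X FX Xx]]; [exists set0; left | exists X; right].
  split.
  - move=> x y /pick[X F0X Xx] /pick[Y F0Y Yy].
    have [Z F0Z [Zx Zy]] : exists2 Z, F0 Z & (N `|` Z) x /\ (N `|` Z) y.
      have [XY|YX] := F0tot X Y F0X F0Y.
      + by exists Y => //; split; [exact: (setUS XY Xx) | exact: Yy].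
      + by exists X => //; split; [exact: Xx | exact: (setUS YX Yy)].
    exact: (setUS (F0sub Z F0Z) ((F0P Z F0Z).1 x y Zx Zy)).
  - by move=> /pick[X F0X Xv]; exact: (F0P X F0X).2.
have [A [[A_mul A_v] A_max]] := Zorn_bigcup chainP.
exists (N `|` A); split => // M' NA_M' M'_mul M'_v x M'x.
apply: contrapT => NAx; have NM' : N `<=` M' by move=> y Ny; apply: NA_M'; left.
apply: (A_max M'); last by rewrite /P setUidr.
split; first by move=> y Ay; apply: NA_M'; right.
by move=> /(_ x M'x) Ax; apply: NAx; right.
Qed.

Section PointwiseGroup.
Variable G : Grp.

Definition pmul (f g : nat -> G) : nat -> G := fun n => gmul (f n) (g n).
Definition pinv (f : nat -> G) : nat -> G := fun n => ginv (f n).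
Definition pone : nat -> G := fun _ => gone G.

Lemma pmulA f g h : pmul f (pmul g h) = pmul (pmul f g) h.
Proof. by apply/funext => n; exact: gmulA. Qed.
Lemma pmul1 f : pmul pone f = f.
Proof. by apply/funext => n; exact: gmul1. Qed.
Lemma pmulV f : pmul (pinv f) f = pone.
Proof. by apply/funext => n; exact: gmulV. Qed.
Lemma pmul1r f : pmul f pone = f.
Proof. by apply/funext => n; exact: gmul1r. Qed.
Lemma pmulVr f : pmul f (pinv f) = pone.
Proof. by apply/funext => n; exact: gmulVr. Qed.

Definition power_grp : Grp := MkGrp pmulA pmul1 pmulV pmul1r pmulVr.

Lemma gpow_power_grp (f : power_grp) k : gpow f k = (fun n => gpow (f n) k).
Proof. by elim: k => [|k IH] //=; rewrite IH. Qed.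
End PointwiseGroup.

Section WordBalls.
Variables (G : Grp) (S : set G).

Definition ball (k : nat) (x : G) : Prop := exists l : list G,
  length l = k /\ (forall y, In y l -> S y \/ S (ginv y) \/ y = gone G) /\ gprod l = x.

Lemma gprod_cat (l1 l2 : list G) : gprod (l1 ++ l2) = gmul (gprod l1) (gprod l2).
Proof. by elim: l1 => [|a l IH] /=; rewrite ?gmul1 // IH gmulA. Qed.

Lemma ball_mul a b x y : ball a x -> ball b y -> ball (a + b) (gmul x y).
Proof.
move=> [l1 [len1 [in1 <-]]] [l2 [len2 [in2 <-]]]; exists (l1 ++ l2).
split; first by rewrite length_app len1 len2.
by split; [move=> z /(in_app_or l1 l2)[]; auto | exact: gprod_cat].
Qed.

Lemma ball_one k : ball k (gone G).
Proof.
exists (repeat (gone G) k); split; first exact: repeat_length.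
split; first by move=> y y_in; right; right; exact: repeat_spec y_in.
by elim: k => [|k IH] //=; rewrite IH gmul1.
Qed.

Lemma ball_mono a b x : a <= b -> ball a x -> ball b x.
Proof.
move=> le_ab xa; rewrite -(subnKC le_ab) -(gmul1r x).
exact: ball_mul xa (ball_one _).
Qed.

Lemma ball_gen x : S x -> ball 1 x.
Proof.
move=> Sx; exists [:: x]; split => //.
by split => [y [<-|[]]|/=]; [left | rewrite gmul1r].
Qed.
End WordBalls.

Section NonPrincipalUltrafilter.
Variable U : (nat -> Prop) -> Prop.
Hypothesis U_ultra : ultrafilter U.
Hypothesis U_free : nonprincipal U.

Lemma U_mono (A B : nat -> Prop) : U A -> (forall n, A n -> B n) -> U B.
Proof. by case: U_ultra => _ [_ [mono _]]; exact: mono. Qed.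

Lemma U_and (A B : nat -> Prop) : U A -> U B -> U (fun n => A n /\ B n).
Proof. by case: U_ultra => _ [_ [_ [and _]]]; exact: and. Qed.

Lemma U_all (A : nat -> Prop) : (forall n, A n) -> U A.
Proof. by move=> allA; case: U_ultra => UT _; apply: U_mono UT _ => n _. Qed.

Lemma U_nonempty (A : nat -> Prop) : U A -> exists n, A n.
Proof.
move=> UA; apply: contrapT => /forallNP noA; case: U_ultra => _ [U_empty _].
by apply: U_empty; apply: U_mono UA _ => n /noA.
Qed.

Lemma U_ge k : U (fun n => k <= n).
Proof.
elim: k => [|k IH]; first exact: U_all.
have U_neq : U (fun n => n <> k).
  by case: U_ultra => _ [_ [_ [_ /(_ (fun n => n = k))[/U_free|]]]].
apply: U_mono (U_and IH U_neq) _ => n [le_kn neq_nk].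
by rewrite ltn_neqAle le_kn andbT; apply/eqP => eq_kn; apply: neq_nk.
Qed.
End NonPrincipalUltrafilter.

Section BoundedSequences.
Variables (G : Grp) (S : set G) (U : (nat -> Prop) -> Prop).
Hypothesis U_ultra : ultrafilter U.

Definition bounded (f : power_grp G) : Prop := exists k, U (fun n => ball S k (f n)).

Lemma bounded_mul : mul_closed bounded.
Proof.
move=> f g [a fa] [b gb]; exists (a + b).
by apply: U_mono (U_and U_ultra fa gb) _ => // n [] /ball_mul; apply.
Qed.

Lemma bounded_gen (f : power_grp G) : (forall n, S (f n)) -> bounded f.
Proof. by move=> Sf; exists 1; apply: U_all => // n; exact: ball_gen. Qed.

Lemma bounded_U_eq (f g : power_grp G) :
  U (fun n => f n = g n) -> bounded (gmul (ginv f) g).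
Proof.
move=> fg; exists 0; apply: U_mono fg _ => // n fgn.
by exists nil; split => //; split => //=; rewrite /pmul /pinv fgn gmulV.
Qed.

Lemma unbounded_escaping (w : power_grp G) :
  nonprincipal U -> (forall n, ~ ball S n (w n)) -> ~ bounded w.
Proof.
move=> U_free w_esc [k wk].
have [n [wkn le_kn]] :=
  U_nonempty U_ultra (U_and U_ultra wk (U_ge U_ultra U_free k)).
exact: w_esc n (ball_mono le_kn wkn).
Qed.
End BoundedSequences.

Lemma escaping_exists (G : Grp) (S : set G) :
  ~ generates_finitely S -> exists w : nat -> G, forall n, ~ ball S n (w n).
Proof.
move=> not_gen; have escape n : exists g, ~ ball S n g.
  apply: contrapT => /forallNP all_ball; apply: not_gen.
  by exists n => g; apply: contrapT; exact: all_ball.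
by have [w] := choice escape; exists w.
Qed.

Theorem lemma1 (G : Grp) (p : nat) (hp : prime p)
  (hgen : ~ generates_finitely (fun x : G => val_pow p x \/ val_comm x)) :
  forall U : (nat -> Prop) -> Prop, ultrafilter U -> nonprincipal U ->
  exists phi : (nat -> G) -> 'Z_p, ultrapower_hom_onto U phi.
Proof.
move=> U U_ultra U_free.
have [w w_esc] := escaping_exists hgen.
have [M [NM M_mul M_w M_max]] := exists_maximal_avoiding
  (bounded_mul U_ultra) (unbounded_escaping U_ultra U_free w_esc).
have M_pow (x : power_grp G) : M (gpow x p).
  apply/NM; rewrite gpow_power_grp.
  by apply: (bounded_gen U_ultra) => n; left; exists (x n).
have M_comm (x y : power_grp G) : M (gcomm x y).
  by apply/NM/(bounded_gen U_ultra) => n; right; exists (x n), (y n).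
have [phi [phi_mul phi_M phi_onto]] :=
  epi_onto_Zp_of_maximal hp M_pow M_comm M_mul M_w M_max.
(* phi is constant on U-classes: g = f (f^-1 g) and f^-1 g is bounded. *)
exists phi; split => // f g fg.
have -> : g = gmul (f : power_grp G) (gmul (ginv (f : power_grp G)) g).
  by rewrite gmulA gmulVr gmul1.
by rewrite phi_mul (phi_M _ (NM _ (bounded_U_eq _ U_ultra fg))) GRing.addr0.
Qed.
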